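(* Let $K$ be a fractal gasket with $\{\omega_\alpha,\omega_\beta,\omega_\gamma\}\subset K$ satisfying the top isolated condition. Then its topology automaton $M_K$ satisfies the $\gamma$-isolated condition.
   Context: Let $\Delta\subset\mathbb R^2$ be the triangle with vertices $\omega_\alpha=(0,0)$, $\omega_\beta=(1,0)$, $\omega_\gamma=(1/2,\sqrt3/2)$. A fractal gasket is the attractor $K$ of $\{\varphi_j(z)=r_j(z+d_j)\}_{j=1}^N$, $r_j\in(0,1)$, $d_j\in\mathbb R^2$, with $\bigcup_j\varphi_j(\Delta)\subset\Delta$ and, for $i\ne j$, $\varphi_i(\Delta)\cap\varphi_j(\Delta)$ consisting only of common vertices. $\Sigma=\{1,\dots,N\}$; $\alpha=-1$ if $(0,0)\notin K$, else $\varphi_\alpha((0,0))=(0,0)$; $\beta=-2$ or $\varphi_\beta$ fixes $(1,0)$; $\gamma=-3$ or $\varphi_\gamma$ fixes $\omega_\gamma$. Top isolated condition: $\omega_\gamma\in K$ and $\varphi_\gamma(\Delta)\cap\varphi_j(\Delta)=\emptyset$ for all $j\ne\gamma$. Topology automaton $M_K$: the automaton with states $S_{uv}$ ($u\ne v\in\{\alpha,\beta,\gamma\}$), $Id$, $Exit$, input alphabet $\Sigma^2$, $\delta(Id,(i,i))=Id$, and for $i\ne j$: $\delta(Id,(i,j))=S_{uv}$ if $u,v\in\Sigma$ and $\varphi_i(\omega_v)=\varphi_j(\omega_u)$, $\delta(Id,(i,j))=Exit$ if $\varphi_i(K)\cap\varphi_j(K)=\emptyset$; $\delta(S_{uv},(i,j))=S_{uv}$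 if $(i,j)=(v,u)$, else $Exit$. $\mathcal P_{uv}=\{(i,j):\delta(Id,(i,j))=S_{uv}\}$; $i\triangleleft_{uv}j$ iff $(i,j)\in\mathcal P_{uv}$ (iff $j\triangleleft_{vu}i$); $j$ is $uv$-isolated if there is neither $i$ with $i\triangleleft_{uv}j$ nor $k$ with $j\triangleleft_{uv}k$. $\gamma$-isolated condition: $\alpha,\beta,\gamma\in\Sigma$; the directed graph on $\Sigma$ with edges $\mathcal P_{\alpha\gamma}\cup\mathcal P_{\beta\gamma}$ has no directed cycle; $\gamma$ is $\alpha\gamma$-, $\beta\gamma$- and $\alpha\beta$-isolated. *)

From HB Require Import structures.
From mathcomp Require Import all_boot all_order all_algebra.
From mathcomp Require Import all_classical all_reals topology normedtype.
Set Implicit Arguments. Unset Strict Implicit. Unset Printing Implicit Defensive.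
Import Order.TTheory GRing.Theory Num.Theory numFieldTopology.Exports.
Local Open Scope ring_scope.
Local Open Scope classical_set_scope.

Section Gasket.
Variable R : realType.
Variable N : nat.
(* Sigma = 'I_N (indices 0..N-1 in place of 1..N). *)
Variable r : 'I_N -> R.
Variable d : 'I_N -> R * R.

Inductive vtx := Va | Vb | Vc.

Definition omega (u : vtx) : R * R :=
  match u with
  | Va => (0, 0)
  | Vb => (1, 0)
  | Vc => (2^-1, Num.sqrt 3 / 2)
  end.

Definition Delta : set (R * R) :=
  [set z | exists l1 l2 l3 : R, [/\ 0 <= l1, 0 <= l2, 0 <= l3, l1 + l2 + l3 = 1 &
     z = (l1 * (omega Va).1 + l2 * (omega Vb).1 + l3 * (omega Vc).1,
          l1 * (omega Va).2 + l2 * (omega Vb).2 + l3 * (omega Vc).2)]].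

Definition phi (j : 'I_N) (z : R * R) : R * R :=
  (r j * (z.1 + (d j).1), r j * (z.2 + (d j).2)).

(* the index alpha / beta / gamma: Some j with phi_j fixing omega_u,
   None (playing the role of -1, -2, -3) if no such index exists *)
Definition vidx (u : vtx) : option 'I_N :=
  [pick j | phi j (omega u) == omega u].

(* P_uv = {(i,j) : delta(Id,(i,j)) = S_uv} *)
Definition Prel (u v : vtx) : rel 'I_N := fun i j =>
  [&& i != j, vidx u != None, vidx v != None & phi i (omega v) == phi j (omega u)].

Definition isolated (u v : vtx) (j : 'I_N) : bool :=
  ~~ [exists i, Prel u v i j] && ~~ [exists k, Prel u v j k].

Definition gedge : rel 'I_N := fun i j => Prel Va Vc i j || Prel Vb Vc i j.

Definition gamma_isolated : Prop :=
  exists a b c : 'I_N,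
    [/\ vidx Va = Some a, vidx Vb = Some b, vidx Vc = Some c,
        (forall s : seq 'I_N, s != [::] -> ~~ cycle gedge s) &
        [/\ isolated Va Vc c, isolated Vb Vc c & isolated Va Vb c]].

Definition gasket_IFS : Prop :=
  (forall j, 0 < r j < 1) /\
  (forall j, phi j @` Delta `<=` Delta) /\
  (forall i j, i != j -> forall z, (phi i @` Delta) z -> (phi j @` Delta) z ->
     exists u v : vtx, z = phi i (omega u) /\ z = phi j (omega v)).

Definition attractor (K : set (R * R)) : Prop :=
  [/\ compact K, K !=set0 & K = \bigcup_(j in [set: 'I_N]) (phi j @` K)].

Definition top_isolated (K : set (R * R)) : Prop :=
  K (omega Vc) /\
  exists c, vidx Vc = Some c /\
    forall j, j != c -> (phi c @` Delta) `&` (phi j @` Delta) = set0.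

End Gasket.

(* Each vertex of Delta lying in K is fixed by one of the maps.  Indeed the maps contract
   and send Delta into itself, so K lies in the closure of Delta, i.e. in Delta.  If
   omega_u = phi_j(k) with k in K, then phi_j(omega_u) = omega_u + r_j (omega_u - k) is a
   point of Delta, and since omega_u is an extreme point of Delta this forces
   phi_j(omega_u) = omega_u.  Along an edge of P_{alpha gamma} u P_{beta gamma} the height
   of the base of phi_i(Delta) strictly increases, so there is no directed cycle.  Finally
   the top isolated condition forbids phi_gamma(Delta) to share a vertex with any other
   phi_j(Delta), which is exactly the isolation of gamma. *)

From Pilot Require Import Defs.
From mathcomp Require Import all_boot all_order all_algebra.
From mathcomp Require Import all_classical all_reals topology normedtype.
From mathcomp Require Import sequences ring lra.
Import Order.TTheory GRing.Theory Num.Theory.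
Import numFieldTopology.Exports numFieldNormedType.Exports.
Set Implicit Arguments.
Unset Strict Implicit.
Unset Printing Implicit Defensive.

Local Open Scope ring_scope.
Local Open Scope classical_set_scope.

Lemma potential_acyclic (T : eqType) (e : rel T) {disp} (O : porderType disp)
    (h : T -> O) :
  (forall x y, e x y -> (h x < h y)%O) -> forall s, s != [::] -> ~~ cycle e s.
Proof.
move=> e_lt [//|x p] _; apply/negP => /= /(sub_path e_lt).
have lt_trans' : transitive (relpre h <%O) by move=> ? ? ?; exact: lt_trans.
by move=> /(order_path_min lt_trans'); rewrite all_rcons /= ltxx.
Qed.

Section ContractionClosure.
Variables (R : realType) (T : pseudoMetricType R) (I : Type) (f : I -> T -> T) (q : R).
Hypothesis q_ge0 : 0 <= q.
Hypothesis q_lt1 : q < 1.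
Hypothesis f_contract : forall i x y e, ball x e y -> ball (f i x) (q * e) (f i y).

Lemma exists_expr_mul_lt (C : R) {e : R} : 0 < e -> exists n, q ^+ n * C < e.
Proof.
move=> e0; have q1 : `|q| < 1 by rewrite ger0_norm.
have C0 : 0 < `|C| + 1 by rewrite ltr_pwDr.
have [n _ /(_ n (leqnn n)) /=] := cvgr0_norm_lt _ (cvg_expr q1) _ (divr_gt0 e0 C0).
rewrite ger0_norm ?exprn_ge0 // ltr_pdivlMr // => hn; exists n.
apply: le_lt_trans hn; rewrite ler_wpM2l ?exprn_ge0 //.
by rewrite (le_trans (ler_norm C)) // lerDl.
Qed.

Lemma invariant_sub_closure (D K : set T) (x0 : T) (C : R) :
  (forall i, f i @` D `<=` D) -> D x0 -> K `<=` ball x0 C ->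
  K `<=` \bigcup_(i in [set: I]) (f i @` K) -> K `<=` closure D.
Proof.
move=> fD Dx0 KC Kinv.
have near_D n z : K z -> exists2 x, D x & ball z (q ^+ n * C) x.
  elim: n z => [|n IHn] z Kz.
    by exists x0; rewrite // expr0 mul1r; apply: ball_sym; exact: KC.
  have [i _ [z' Kz' <-]] := Kinv z Kz.
  have [x Dx z'x] := IHn z' Kz'.
  by exists (f i x); [apply: fD; exists x | rewrite exprS -mulrA; exact: f_contract].
move=> z Kz B /nbhs_ballP[e /= e0 zeB].
have [n hn] := exists_expr_mul_lt C e0.
have [x Dx zx] := near_D n z Kz.
by exists x; split => //; apply: zeB; apply: le_ball (ltW hn) _ zx.
Qed.
End ContractionClosure.

Section Triangle.
Variable R : realType.

Definition affine2 (a b c : R) (z : R * R) : R := a * z.1 + b * z.2 + c.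

Lemma affine2_continuous a b c : continuous (affine2 a b c).
Proof.
move=> z; apply: cvgD; last exact: cvg_cst.
by apply: cvgD; apply: cvgM;
  [exact: cvg_cst | exact: cvg_fst | exact: cvg_cst | exact: cvg_snd].
Qed.

(* Barycentric coordinates with respect to omega Va, omega Vb, omega Vc. *)
Definition bary (u : vtx) : R * R -> R :=
  match u with
  | Va => affine2 (-1) (- (Num.sqrt 3)^-1) 1
  | Vb => affine2 1 (- (Num.sqrt 3)^-1) 0
  | Vc => affine2 0 (2 / Num.sqrt 3) 0
  end.

Definition simplex : set (R * R) := [set z | forall u, 0 <= bary u z].

Lemma sqrt3_neq0 : Num.sqrt 3 != 0 :> R.
Proof. by rewrite gt_eqF // sqrtr_gt0 ltr0n. Qed.

Lemma bary_sum z : bary Va z + bary Vb z + bary Vc z = 1.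
Proof. by rewrite /= /affine2; ring. Qed.

Lemma bary_omega u : bary u (omega R u) = 1.
Proof. by have := sqrt3_neq0; case: u; rewrite /= /affine2 /= => ?; field. Qed.

Lemma Delta_sub_simplex : @Delta R `<=` simplex.
Proof.
move=> z [l1 [l2 [l3 [l1_ge0 l2_ge0 l3_ge0 l_sum ez]]]] u.
suff -> : bary u z = match u with Va => l1 | Vb => l2 | Vc => l3 end by case: u.
have s3_neq0 := sqrt3_neq0; have -> : l1 = 1 - l2 - l3 by rewrite -l_sum; ring.
by rewrite ez; case: u; rewrite /= /affine2 /=; field.
Qed.

Lemma simplex_closed : closed simplex.
Proof.
have -> : simplex = \bigcap_(u in [set: vtx]) (bary u @^-1` [set x | 0 <= x]).
  by apply/seteqP; split => [z zT u _ | z zT u]; [exact: zT | exact: zT].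
apply: closed_bigI => u _; apply: preimage_closed; last exact: closed_ge.
by move=> z _; case: u; exact: affine2_continuous.
Qed.

Lemma simplex_bary_le1 u z : simplex z -> bary u z <= 1.
Proof.
move=> zT; have := bary_sum z.
by have := zT Va; have := zT Vb; have := zT Vc; case: u; lra.
Qed.

Lemma bary_coord z : z = (bary Vb z + bary Vc z / 2, bary Vc z * Num.sqrt 3 / 2).
Proof.
have s3_neq0 := sqrt3_neq0.
by case: z => x y; rewrite /= /affine2 /=; congr pair; field.
Qed.

Lemma simplex_bary_eq1 z u : simplex z -> bary u z = 1 -> z = omega R u.
Proof.
move=> zT zu1; rewrite [LHS]bary_coord.
have := bary_sum z; have := zT Va; have := zT Vb; have := zT Vc.
case: u zu1 => zu1 *; [
  have [-> ->] : bary Vb z = 0 /\ bary Vc z = 0 by lra |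
  have [-> ->] : bary Vb z = 1 /\ bary Vc z = 0 by lra |
  have [-> ->] : bary Vb z = 0 /\ bary Vc z = 1 by lra];
  by congr pair; ring.
Qed.

Lemma omega_Delta u : Delta (omega R u).
Proof.
by case: u; [exists 1, 0, 0 | exists 0, 1, 0 | exists 0, 0, 1];
  split => //=; rewrite ?addr0 ?add0r //; congr pair; ring.
Qed.

(* [R * R] is not a normed module, but it has the topology of [R^o * R^o], which is. *)
Lemma compact_sub_ball0 (K : set (R * R)) : compact K -> exists C, K `<=` ball (0, 0) C.
Proof.
move=> cK; have [M [_ HM]] := @compact_bounded R (R^o * R^o)%type K cK.
exists (M + 2) => z Kz; have := HM (M + 1) (ltr_pwDr ltr01 (lexx M)) z Kz.
rewrite /= prod_normE /= ge_max => /andP[z1 z2].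
have lt_M2 x : `|x| <= M + 1 -> `|0 - x| < M + 2.
  by move=> xM; rewrite sub0r normrN (le_lt_trans xM) // ltrD2l ltr1n.
by split; apply: lt_M2.
Qed.

Section Gasket.
Variables (N : nat) (r : 'I_N -> R) (d : 'I_N -> R * R).

Lemma bary_phiB u j x y :
  bary u (phi r d j x) - bary u (phi r d j y) = r j * (bary u x - bary u y).
Proof. by case: u; rewrite /= /affine2 /phi /=; ring. Qed.

(* bary u is affine, so bary u (phi j (omega u)) = 1 + r j (1 - bary u k) >= 1. *)
Lemma phi_vertex_fixed j u k :
  0 < r j -> simplex k -> simplex (phi r d j (omega R u)) ->
  phi r d j k = omega R u -> phi r d j (omega R u) = omega R u.
Proof.
move=> rj_gt0 kT phiT phik; apply: simplex_bary_eq1 => //.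
have := bary_phiB u j (omega R u) k; rewrite phik bary_omega.
move: kT phiT => /(simplex_bary_le1 u) k_le1 /(simplex_bary_le1 u) phi_le1.
nra.
Qed.

Lemma phi_ball j q x y e :
  0 < r j <= q -> ball x e y -> ball (phi r d j x) (q * e) (phi r d j y).
Proof.
case/andP => rj_gt0 rj_le [x1y1 x2y2].
have scale (a b c : R) : `|a - b| < e -> `|r j * (a + c) - r j * (b + c)| < q * e.
  move=> ab; rewrite -mulrBr opprD addrACA subrr addr0 normrM gtr0_norm //.
  apply: le_lt_trans (ler_wpM2r (normr_ge0 _) rj_le) _.
  by rewrite ltr_pM2l // (lt_le_trans rj_gt0).
by split; apply: scale.
Qed.

(* The edge identifies phi i (omega Vc), at height r i * sqrt 3 / 2 above the base of
   phi i Delta, with phi j (omega Va) or phi j (omega Vb), on the base of phi j Delta. *)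
Lemma gedge_phi_lt i j : (forall j, 0 < r j) -> gedge r d i j ->
  (phi r d i (omega R Va)).2 < (phi r d j (omega R Va)).2.
Proof.
move=> r_gt0 eij.
have [u [u2 E]] : exists u,
    (omega R u).2 = 0 /\ phi r d i (omega R Vc) = phi r d j (omega R u).
  by case/orP: eij => /and4P[_ _ _ /eqP E]; [exists Va | exists Vb].
move: E => /(congr1 snd); rewrite /phi /= u2 => <-.
by rewrite ltr_pM2l // ltrD2r divr_gt0 // sqrtr_gt0 ltr0n.
Qed.

Lemma top_isolated_isolated c u v :
  (forall j, j != c -> (phi r d c @` @Delta R) `&` (phi r d j @` @Delta R) = set0) ->
  Defs.isolated r d u v c.
Proof.
move=> disj.
have no_common i w w' : i != c -> phi r d c (omega R w) <> phi r d i (omega R w').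
  move=> ic E; have /eqP := disj i ic; apply/negP/set0P.
  exists (phi r d c (omega R w)); split.
    by exists (omega R w) => //; exact: omega_Delta.
  by rewrite E; exists (omega R w') => //; exact: omega_Delta.
apply/andP; split; apply/existsP => -[i /and4P[ic _ _ /eqP E]].
- exact: (no_common i u v ic).
- by apply: (no_common i v u); rewrite 1?eq_sym.
Qed.

Lemma attractor_sub_simplex K : gasket_IFS r d -> attractor r d K -> K `<=` simplex.
Proof.
move=> [r_bnd [phiD _]] [cK _ K_eq].
pose q := \big[Order.max/0]_j r j.
have r_le_q j : r j <= q by exact: le_bigmax.
have q_ge0 : 0 <= q by exact: bigmax_ge_id.
have q_lt1 : q < 1.
  by apply/bigmax_ltP; split => [|j _]; last case/andP: (r_bnd j).
have phi_contract j x y e : ball x e y -> ball (phi r d j x) (q * e) (phi r d j y).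
  by apply: phi_ball; case/andP: (r_bnd j) => -> _; exact: r_le_q.
have [C KC] := compact_sub_ball0 cK.
have K_sub_cl : K `<=` closure (@Delta R).
  apply: (invariant_sub_closure q_ge0 q_lt1 phi_contract phiD (omega_Delta Va) KC).
  by rewrite {1}K_eq.
by move=> z /K_sub_cl /(closureS Delta_sub_simplex) /simplex_closed.
Qed.

Lemma attractor_vertex_vidx K u : gasket_IFS r d -> attractor r d K ->
  K (omega R u) -> exists a, vidx r d u = Some a.
Proof.
move=> G A Ku; have KT := attractor_sub_simplex G A.
case: G A => [r_bnd [phiD _]] [_ _ K_eq].
have [j _ [k Kk phik]] : (\bigcup_(j in setT) (phi r d j @` K)) (omega R u).
  by rewrite -K_eq.
have phiT : simplex (phi r d j (omega R u)).
  by apply/Delta_sub_simplex/phiD; exists (omega R u) => //; exact: omega_Delta.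
have r_gt0 : 0 < r j by case/andP: (r_bnd j).
have fixed := phi_vertex_fixed r_gt0 (KT k Kk) phiT phik.
by rewrite /vidx; case: pickP => [a _|/(_ j)]; [exists a | rewrite fixed eqxx].
Qed.

End Gasket.

End Triangle.

Theorem lemma5p1 (R : realType) (N : nat) (r : 'I_N -> R) (d : 'I_N -> R * R)
  (K : set (R * R)) :
  gasket_IFS r d -> attractor r d K ->
  K (omega R Va) -> K (omega R Vb) -> K (omega R Vc) ->
  top_isolated r d K ->
  gamma_isolated r d.
Proof.
move=> G A Ka Kb _ [_ [c [Hc disj]]].
have r_gt0 j : 0 < r j by case: G => /(_ j) /andP[].
have [a Ha] := attractor_vertex_vidx G A Ka.
have [b Hb] := attractor_vertex_vidx G A Kb.
exists a, b, c; split => //.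
  apply: (potential_acyclic (h := fun j => (phi r d j (omega R Va)).2)) => i j.
  exact: gedge_phi_lt.
by split; apply: top_isolated_isolated.
Qed.
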